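(* Let $P^v_i$ ($i=1,\dots,n$, $v\in\mathbb{R}^n$) be the extremal polynomials of the free nilpotent Lie group of rank $r\ge2$ and step $s\ge2$ with respect to a Hall–Grayson–Grossman basis $X_1,\dots,X_n$. Then: (i) if $i,\ell\in\{1,\dots,n\}$ satisfy $i\prec\ell$ and $v_\ell\neq0$, then $P^v_i$ is not the zero polynomial; (ii) if $v\in\mathbb{R}^n$ is such that $P^v_i=0$ (as a polynomial) for all $i=1,\dots,r$, then $v=0$; (iii) for all $i=1,\dots,n$ and $v\in\mathbb{R}^n$, $P^v_i(0)=v_i$.
   Context: Multi-indices $\mathcal I=\mathbb{N}^n$ with $|\alpha|$, $\alpha!$, $x^\alpha$. Hall basis of the free nilpotent Lie algebra $\mathfrak g$ (rank $r$, step $s$, dimension $n$): start from a basis $X_1,\dots,X_r$ of the first layer (degree 1); inductively the degree-$d$ elements are brackets $[X_i,X_j]$ of earlier elements with $i>j$, $d(i)+d(j)=d$, and, if $X_i$ was constructed as $[X_h,X_k]$, then $k\le j$; list them after lower-degree elements. Strings: $(\ell)$ for $\ell\le r$; for $X_\ell=[X_a,X_b]$, the string of $a$ followed by $b$. With string $(\ell_0,\dots,\ell_h)$, $I(\ell)_j=\#\{1\le p\le h:\ell_p=j\}$; $j\prec\ell$ iff the string of $j$ is an initial segment of that of $\ell$. $[Y,X_\alpha]$ is the left-nested bracket of $Y$ with $X_1$ ($\alpha_1$ times), ..., $X_n$ ($\alpha_n$ times), $[Y,X_0]=Y$. Realization on $\mathbb{R}^n$: $X_i=\sum_{\ell:\,i\prec\ell}\frac{(-1)^{|I(\ell)|}}{I(\ell)!}x^{I(\ell)}\partial_{x_\ell}$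 ($i\le r$), and $X_\ell=[X_a,X_b]$ for $\ell>r$ constructed as $[X_a,X_b]$; these form a Lie algebra of vector fields isomorphic to $\mathfrak g$. Generalized structure constants $c^k_{i\alpha}$: $[X_i,X_\alpha]=\sum_kc^k_{i\alpha}X_k$. Extremal polynomials: $P^v_i(x)=\sum_{\alpha\in\mathcal I}\frac{(-1)^{|\alpha|}}{\alpha!}\big(\sum_kc^k_{i\alpha}v_k\big)x^\alpha$. *)

From mathcomp Require Import all_boot all_order all_algebra.
From mathcomp Require Import reals.
From mathcomp Require Import mpoly.
Set Implicit Arguments. Unset Strict Implicit. Unset Printing Implicit Defensive.
Import Order.TTheory GRing.Theory Num.Theory.
Local Open Scope ring_scope.

(* Indices are 0-based: the basis is X_0, ..., X_{n-1} ('I_n); the first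
   layer (generators) consists of the indices l < r.
   A Hall basis is described by
     hb  : 'I_n -> option ('I_n * 'I_n)
           None for a generator, Some (a, b) when X_l = [X_a, X_b];
     deg : 'I_n -> nat   the degree of each element. *)

Definition HallBasis (r s n : nat) (hb : 'I_n -> option ('I_n * 'I_n))
  (deg : 'I_n -> nat) : Prop :=
  (r <= n)%N /\
      (forall l : 'I_n, (l < r)%N <-> hb l = None) /\
      (forall l : 'I_n, (l < r)%N -> deg l = 1%N) /\
      (forall (l a b : 'I_n), hb l = Some (a, b) ->
         [/\ (b < a)%N, (a < l)%N, deg l = (deg a + deg b)%N &
             forall h k : 'I_n, hb a = Some (h, k) -> (k <= b)%N]) /\
      (forall l l' : 'I_n, (l <= l')%N -> (deg l <= deg l')%N) /\
      (forall l : 'I_n, (deg l <= s)%N) /\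
      (forall a b : 'I_n, (b < a)%N -> (deg a + deg b <= s)%N ->
         (forall h k : 'I_n, hb a = Some (h, k) -> (k <= b)%N) ->
         exists l : 'I_n, hb l = Some (a, b)) /\
      (forall l l' : 'I_n, (r <= l)%N -> hb l = hb l' -> l = l').

Arguments HallBasis r s n hb deg : clear implicits.

Section HallRealization.
Variables (R : realType) (n : nat) (hb : 'I_n -> option ('I_n * 'I_n)).

(* string of an index: (l) for a generator, string(a) ++ [b] for [X_a,X_b];
   the recursion is well founded since a < l, implemented with fuel n. *)
Fixpoint hstring_fuel (fuel : nat) (l : 'I_n) : seq 'I_n :=
  match fuel with
  | 0 => [:: l]
  | f.+1 => match hb l with
            | None => [:: l]
            | Some (a, b) => rcons (hstring_fuel f a) b
            end
  end.
Definition hstring (l : 'I_n) : seq 'I_n := hstring_fuel n l.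

Definition Iidx (l : 'I_n) : 'X_{1..n} :=
  [multinom count_mem j (behead (hstring l)) | j < n].

Definition hprec (j l : 'I_n) : bool := prefix (hstring j) (hstring l).

Definition mfact (a : 'X_{1..n}) : nat := (\prod_(j < n) (a j)`!)%N.

(* polynomial vector fields on R^n: component l is the coefficient of d/dx_l *)
Definition vfield := 'I_n -> {mpoly R[n]}.

Definition vbr (X Y : vfield) : vfield :=
  fun k => \sum_(j < n) (X j * (Y k)^`M(j) - Y j * (X k)^`M(j)).

Definition genfield (i : 'I_n) : vfield :=
  fun l => if hprec i l then
             ((-1) ^+ mdeg (Iidx l) / (mfact (Iidx l))%:R) *: 'X_[Iidx l]
           else 0.

Fixpoint hfield_fuel (fuel : nat) (l : 'I_n) : vfield :=
  match fuel with
  | 0 => genfield l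
  | f.+1 => match hb l with
            | None => genfield l
            | Some (a, b) => vbr (hfield_fuel f a) (hfield_fuel f b)
            end
  end.
Definition hfield (l : 'I_n) : vfield := hfield_fuel n l.

(* [Y, X_alpha]: left-nested bracket with X_1 (alpha_1 times), ..., X_n *)
Definition nested (Y : vfield) (alpha : 'X_{1..n}) : vfield :=
  foldl (fun Z j => iter (alpha j) (fun W => vbr W (hfield j)) Z) Y (enum 'I_n).

Definition gen_struct_const (c : 'I_n -> 'X_{1..n} -> 'I_n -> R) : Prop :=
  forall (i : 'I_n) (alpha : 'X_{1..n}),
    nested (hfield i) alpha = (fun l => \sum_(k < n) c i alpha k *: hfield k l).

(* coefficient of x^alpha in the extremal polynomial P^v_i *)
Definition Pcoef (c : 'I_n -> 'X_{1..n} -> 'I_n -> R) (v : 'I_n -> R)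
  (i : 'I_n) (alpha : 'X_{1..n}) : R :=
  (-1) ^+ mdeg alpha / (mfact alpha)%:R * \sum_(k < n) c i alpha k * v k.

End HallRealization.

From mathcomp Require Import all_boot all_order all_algebra.
From mathcomp Require Import reals.
From mathcomp Require Import mpoly.
From mathcomp Require Import ring.
From Stdlib Require Import FunctionalExtensionality.
Set Implicit Arguments. Unset Strict Implicit. Unset Printing Implicit Defensive.
Import Order.TTheory GRing.Theory Num.Theory.
Local Open Scope ring_scope.

(* Everything rests on one fact: the realized field X_l takes the value e_l at
   the origin.  Since the X_k(0) form the standard basis, the generalized
   structure constants are the values at 0 of the nested brackets,
   c^k_{i alpha} = [X_i, X_alpha]_k(0); and when i ≺ l, bracketing X_i
   successively with the letters of the string of l that follow the string of
   i rebuilds X_l, the Hall condition putting these letters in the increasing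
   order used by [X_i, X_alpha].  Hence P^v_i has the coefficient
   (-1)^|alpha| v_l / alpha! at x^alpha, which gives (i) and (iii), and (ii)
   because the head of every string is a generator.

   X_l(0) = e_l is proved by Lazard elimination, by induction on the size of the
   Hall set.  Its least index m0 is a generator realized as d/dx_m0, and no
   other field has an x_m0-component.  Substituting x_m0 = 0 preserves values
   at 0, commutes with every bracket not involving X_m0, and turns the fields
   into the realization of the Hall set without m0, whose generators are the
   iterated brackets [X_c, X_m0, ..., X_m0]. *)

Lemma ord_lt_ind n (P : 'I_n -> Prop) :
  (forall l : 'I_n, (forall a : 'I_n, (a < l)%N -> P a) -> P l) -> forall l, P l.
Proof.
move=> IH l; have [k lk] := ubnP l; elim: k l lk => // k IHk l lk.
by apply: IH => a al; apply: IHk; exact: leq_trans al lk.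
Qed.

Lemma rcons_nseq T p (x : T) : rcons (nseq p x) x = nseq p.+1 x.
Proof. by elim: p => //= p ->. Qed.

Lemma prefix_rcons_neq (T : eqType) (u s : seq T) x :
  prefix u (rcons s x) -> u != rcons s x -> prefix u s.
Proof.
case/prefixP => s3; case/lastP: s3 => [|s3 y]; first by rewrite cats0 => ->; rewrite eqxx.
by rewrite -rcons_cat => /rcons_inj [-> _] _; exact: prefix_prefix.
Qed.

Lemma eq_in_foldl (T : Type) (S : eqType) (s : seq S) (f g : T -> S -> T) (z : T) :
  (forall j, j \in s -> f^~ j =1 g^~ j) -> foldl f z s = foldl g z s.
Proof.
elim: s z => //= j s IH z fg; rewrite fg ?mem_head //.
by apply: IH => x xs; apply: fg; rewrite inE xs orbT.
Qed.

Lemma mfact0 n : mfact (0%MM : 'X_{1..n}) = 1%N.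
Proof. by rewrite /mfact big1 // => i _; rewrite mnm0E. Qed.

Lemma mfact_gt0 n (J : 'X_{1..n}) : (0 < mfact J)%N.
Proof. by rewrite /mfact prodn_gt0 // => i; rewrite fact_gt0. Qed.

Lemma mderiv_signed_monomial (R : realType) n (J : 'X_{1..n}) (i : 'I_n) :
  (0 < J i)%N ->
  - ((((-1) ^+ mdeg J / (mfact J)%:R) : R) *: ('X_[J] : {mpoly R[n]}))^`M(i) =
  ((-1) ^+ mdeg (J - U_(i)) / (mfact (J - U_(i)))%:R) *: 'X_[J - U_(i)].
Proof.
move=> Ji; set J' := (J - U_(i))%MM.
have EJ : J = (J' + U_(i))%MM.
  apply/mnmP => j; rewrite mnmDE mnmBE mnm1E.
  by have [<-|_] := eqVneq i j; rewrite ?subn0 ?addn0 // subnK.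
have Jdeg : mdeg J = (mdeg J').+1 by rewrite {1}EJ mdegD mdeg1 addn1.
have Jfact : mfact J = (J i * mfact J')%N.
  rewrite /mfact (bigD1 i) //= [in RHS](bigD1 i) //=.
  have -> : \prod_(j < n | j != i) (J' j)`! = \prod_(j < n | j != i) (J j)`!.
    by apply: eq_bigr => j ji; rewrite /J' mnmBE mnm1E eq_sym (negbTE ji) subn0.
  rewrite /J' mnmBE mnm1E eqxx; move: Ji; case: (J i) => // q _.
  by rewrite subn1 factS mulnA.
rewrite mderivZ mderivX -/J' scalerA -scaleNr; congr (_ *: _).
rewrite Jdeg Jfact exprS natrM.
have Ji0 : ((J i)%:R : R) != 0 by rewrite pnatr_eq0 -lt0n.
have J'0 : ((mfact J')%:R : R) != 0 by rewrite pnatr_eq0 -lt0n mfact_gt0.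
by field; rewrite Ji0 J'0.
Qed.

(* A Hall set on the indices in [act]; the active set shrinks under the
   elimination below. *)
Record hall_system n (h : 'I_n -> option ('I_n * 'I_n)) (act : pred 'I_n) : Prop :=
  HallSystem {
    hall_ordered : forall l a b, act l -> h l = Some (a, b) ->
      [/\ act a, act b, (b < a)%N & (a < l)%N];
    hall_condition : forall l a b a' b', act l -> h l = Some (a, b) ->
      h a = Some (a', b') -> (b' <= b)%N;
    hall_injective : forall l l', act l -> act l' -> h l != None ->
      h l = h l' -> l = l' }.

Section HallStrings.
Variables (n : nat) (h : 'I_n -> option ('I_n * 'I_n)) (act : pred 'I_n).
Hypothesis hallS : hall_system h act.

Lemma hstring_fuel_stable f1 f2 l : act l -> (l < f1)%N -> (l < f2)%N ->
  hstring_fuel h f1 l = hstring_fuel h f2 l.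
Proof.
elim: f1 f2 l => [|f IH] [|g] l al //= lf lg.
case E: (h l) => [[a b]|] //; have [aa _ _ al'] := hall_ordered hallS al E.
by rewrite (IH g a aa) ?(leq_trans al').
Qed.

Lemma hstringE l : act l -> hstring h l =
  match h l with None => [:: l] | Some (a, b) => rcons (hstring h a) b end.
Proof.
move=> al; have n0 : (0 < n)%N := leq_ltn_trans (leq0n l) (ltn_ord l).
rewrite /hstring.
have -> : hstring_fuel h n l = hstring_fuel h n.-1.+1 l.
  by apply: hstring_fuel_stable; rewrite ?prednK.
rewrite /=; case E: (h l) => [[a b]|] //.
have [aa _ _ al'] := hall_ordered hallS al E.
have an : (a < n.-1)%N by rewrite -ltnS prednK // (leq_ltn_trans al' (ltn_ord l)).
by rewrite (@hstring_fuel_stable n n.-1).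
Qed.

Lemma hstring_generator l : act l -> h l = None -> hstring h l = [:: l].
Proof. by move=> al E; rewrite hstringE // E. Qed.

Lemma hstring_bracket l a b : act l -> h l = Some (a, b) ->
  hstring h l = rcons (hstring h a) b.
Proof. by move=> al E; rewrite hstringE // E. Qed.

Lemma hstring_neq0 l : hstring h l != [::].
Proof.
suff fuel f : hstring_fuel h f l != [::] by apply: fuel.
by case: f => [|f] //=; case: (h l) => [[a b]|] //; rewrite -size_eq0 size_rcons.
Qed.

Lemma hstring_head l : act l -> exists c t, hstring h l = c :: t /\ h c = None.
Proof.
elim/ord_lt_ind: l => l IH al; case E: (h l) => [[a b]|].
  have [aa _ _ al'] := hall_ordered hallS al E.
  have [c [t [sa hc]]] := IH a al' aa.
  by exists c, (rcons t b); rewrite (hstring_bracket al E) sa.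
by exists l, [::]; rewrite (hstring_generator al E).
Qed.

(* In particular, no bracket string starts with the least active index. *)
Lemma hstring_bracket_shape l : act l -> h l <> None ->
  exists c b t, [/\ hstring h l = [:: c, b & t], (b < c)%N & act b].
Proof.
elim/ord_lt_ind: l => l IH al; case E: (h l) => [[a b]|] // _.
have [aa ab ba al'] := hall_ordered hallS al E; rewrite (hstring_bracket al E).
case Ea: (h a) => [[a1 b1]|].
  have [|c [b2 [t [-> lt ab2]]]] := IH a al' aa; first by rewrite Ea.
  by exists c, b2, (rcons t b).
by rewrite (hstring_generator aa Ea); exists a, b, [::].
Qed.

Lemma hstring_inj l l' : act l -> act l' -> hstring h l = hstring h l' -> l = l'.
Proof.
elim/ord_lt_ind: l l' => l IH l' al al'.
have size_bracket a b : size (rcons (hstring h a) b) != 1%N.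
  by rewrite size_rcons eqSS size_eq0 hstring_neq0.
case E: (h l) => [[a b]|]; case E': (h l') => [[a' b']|].
- rewrite (hstring_bracket al E) (hstring_bracket al' E') => /rcons_inj [ea eb].
  have [aa _ _ lt] := hall_ordered hallS al E.
  have [aa' _ _ _] := hall_ordered hallS al' E'.
  have ea' := IH a lt a' aa aa' ea; subst a' b'.
  by apply: (hall_injective hallS) => //; rewrite ?E ?E'.
- rewrite (hstring_bracket al E) (hstring_generator al' E') => /(congr1 size).
  by move/eqP; rewrite (negbTE (size_bracket _ _)).
- rewrite (hstring_generator al E) (hstring_bracket al' E') => /(congr1 size).
  by move/eqP; rewrite eq_sym (negbTE (size_bracket _ _)).
- by rewrite (hstring_generator al E) (hstring_generator al' E') => -[].
Qed.

Lemma hstring_behead_le l a b : act l -> h l = Some (a, b) ->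
  forall x, x \in behead (hstring h a) -> (x <= b)%N.
Proof.
elim/ord_lt_ind: a l b => a IH l b al E x.
have [aa _ _ _] := hall_ordered hallS al E.
case Ea: (h a) => [[a1 b1]|]; last by rewrite (hstring_generator aa Ea).
have b1b := hall_condition hallS al E Ea.
have [_ _ _ a1a] := hall_ordered hallS aa Ea.
rewrite (hstring_bracket aa Ea).
have := hstring_neq0 a1; case: (hstring h a1) (IH a1 a1a a b1 aa Ea) => // y t IH' _ /=.
rewrite mem_rcons in_cons => /orP [/eqP ->|xt] //.
by apply: leq_trans b1b; apply: IH'.
Qed.

End HallStrings.

Definition genfield_on (R : realType) n (h : 'I_n -> option ('I_n * 'I_n))
  (act : pred 'I_n) (i : 'I_n) : vfield R n :=
  fun k => if act k then genfield R h i k else 0.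

Fixpoint hfield_on_fuel (R : realType) n (h : 'I_n -> option ('I_n * 'I_n))
  (act : pred 'I_n) (f : nat) (l : 'I_n) : vfield R n :=
  match f with
  | 0 => genfield_on R h act l
  | f'.+1 => match h l with
             | None => genfield_on R h act l
             | Some (a, b) => vbr (hfield_on_fuel R h act f' a) (hfield_on_fuel R h act f' b)
             end
  end.

Definition hfield_on (R : realType) n h act (l : 'I_n) : vfield R n :=
  hfield_on_fuel R h act n l.

Lemma hfield_on_predT (R : realType) n (h : 'I_n -> option ('I_n * 'I_n)) l :
  hfield R h l = hfield_on R h predT l.
Proof.
suff fuel f : hfield_fuel R h f l = hfield_on_fuel R h predT f l by apply: fuel.
elim: f l => [|f IH] l //=.
by case: (h l) => [[a b]|] //; rewrite !IH.
Qed.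

Section Realization.
Variables (R : realType) (n : nat) (h : 'I_n -> option ('I_n * 'I_n)) (act : pred 'I_n).
Hypothesis hallS : hall_system h act.

Local Notation F := (hfield_on R h act).

Lemma hfield_on_fuel_stable f1 f2 l : act l -> (l < f1)%N -> (l < f2)%N ->
  hfield_on_fuel R h act f1 l = hfield_on_fuel R h act f2 l.
Proof.
elim: f1 f2 l => [|f IH] [|g] l al //= lf lg.
case E: (h l) => [[a b]|] //; have [aa ab ba al'] := hall_ordered hallS al E.
by rewrite (IH g a aa) ?(leq_trans al') // (IH g b ab) // ?(leq_trans (ltn_trans ba al')).
Qed.

Lemma hfield_onE l : act l -> F l =
  match h l with None => genfield_on R h act l | Some (a, b) => vbr (F a) (F b) end.
Proof.
move=> al; have n0 : (0 < n)%N := leq_ltn_trans (leq0n l) (ltn_ord l).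
rewrite /hfield_on.
have -> : hfield_on_fuel R h act n l = hfield_on_fuel R h act n.-1.+1 l.
  by apply: hfield_on_fuel_stable; rewrite ?prednK.
rewrite /=; case E: (h l) => [[a b]|] //.
have [aa ab ba al'] := hall_ordered hallS al E.
have an : (a < n.-1)%N by rewrite -ltnS prednK // (leq_ltn_trans al' (ltn_ord l)).
have bn : (b < n.-1)%N by apply: ltn_trans an.
by rewrite (@hfield_on_fuel_stable n n.-1 a) // (@hfield_on_fuel_stable n n.-1 b).
Qed.

Lemma Iidx_generator l : act l -> h l = None -> Iidx h l = 0%MM.
Proof.
by move=> al E; apply/mnmP => j; rewrite /Iidx (hstring_generator hallS al E) !mnmE.
Qed.

Section LeastIndex.
Variable m0 : 'I_n.
Hypotheses (act_m0 : act m0) (m0_min : forall k, act k -> (m0 <= k)%N).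

Lemma least_generator : h m0 = None.
Proof.
case E: (h m0) => [[a b]|] //; have [_ ab ba al] := hall_ordered hallS act_m0 E.
by have := m0_min ab; rewrite leqNgt (ltn_trans ba al).
Qed.

Lemma hprec_least k : act k -> hprec h m0 k = (k == m0).
Proof.
move=> ak; rewrite /hprec (hstring_generator hallS act_m0 least_generator).
case E: (h k) => [[a b]|].
  have [|c [b1 [t [-> lt ab1]]]] := hstring_bracket_shape hallS ak; first by rewrite E.
  rewrite prefix_cons prefix0s andbT.
  apply/idP/idP => [/eqP ec|/eqP ekm]; last by rewrite ekm least_generator in E.
  by move: lt; rewrite -ec => lt; have := m0_min ab1; rewrite leqNgt lt.
by rewrite (hstring_generator hallS ak E) prefix_cons prefix0s andbT eq_sym.
Qed.

Lemma hfield_on_least k : F m0 k = ((k == m0)%:R)%:MP.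
Proof.
rewrite (hfield_onE act_m0) least_generator /genfield_on.
case ak: (act k); last first.
  by case: eqP ak => [->|]; rewrite ?act_m0 // => _ _; rewrite mulr0n mpolyC0.
rewrite /genfield hprec_least //; case: eqP => [->|]; last by rewrite mulr0n mpolyC0.
rewrite (Iidx_generator act_m0 least_generator) mdeg0 mfact0 expr0 divr1.
by rewrite mpolyX0 scale1r mulr1n mpolyC1.
Qed.

Lemma hfield_on_least_coord l : act l -> F l m0 = ((l == m0)%:R)%:MP.
Proof.
elim/ord_lt_ind: l => l IH al.
have [->|lm] := eqVneq l m0; first by rewrite hfield_on_least eqxx.
rewrite (hfield_onE al); case E: (h l) => [[a b]|].
  have [aa ab ba al'] := hall_ordered hallS al E.
  rewrite /vbr big1 ?mulr0n ?mpolyC0 // => j _.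
  rewrite (IH a al' aa) (IH b (ltn_trans ba al') ab) !mderivC.
  by rewrite !mulr0 subrr.
rewrite /genfield_on act_m0 /genfield /hprec (hstring_generator hallS al E).
rewrite (hstring_generator hallS act_m0 least_generator).
by rewrite prefix_cons prefix0s andbT (negbTE lm) mulr0n mpolyC0.
Qed.

Lemma vbr_least (X : vfield R n) k : vbr X (F m0) k = - (X k)^`M(m0).
Proof.
rewrite /vbr (bigD1 m0) //= big1 => [|j jm].
  by rewrite !hfield_on_least mderivC mulr0 eqxx mulr1n mpolyC1 mul1r sub0r addr0.
by rewrite !hfield_on_least mderivC mulr0 (negbTE jm) mulr0n mpolyC0 mul0r subrr.
Qed.

End LeastIndex.
End Realization.

(* Lazard elimination of the least index [m0]: a bracket [[a, m0]] becomes a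
   generator, and [m0] is removed. *)
Section Elimination.
Variables (R : realType) (n : nat) (h : 'I_n -> option ('I_n * 'I_n)) (act : pred 'I_n).
Hypothesis hallS : hall_system h act.
Variable m0 : 'I_n.
Hypotheses (act_m0 : act m0) (m0_min : forall k, act k -> (m0 <= k)%N).

Definition hb_elim (l : 'I_n) : option ('I_n * 'I_n) :=
  match h l with Some (a, b) => if b == m0 then None else Some (a, b) | None => None end.

Definition act_elim : pred 'I_n := fun l => act l && (l != m0).

Lemma hb_elim_Some l a b : hb_elim l = Some (a, b) -> h l = Some (a, b) /\ b != m0.
Proof.
rewrite /hb_elim; case: (h l) => [[x y]|] //.
by case: eqP => // yn [<- <-]; split=> //; apply/eqP.
Qed.

Lemma hall_system_elim : hall_system hb_elim act_elim.
Proof.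
split.
- move=> l a b /andP [al lm] /hb_elim_Some [E bm].
  have [aa ab ba al'] := hall_ordered hallS al E.
  split=> //; rewrite /act_elim ?aa ?ab ?bm //=.
  by apply/eqP => am; have := m0_min ab; rewrite -am leqNgt ba.
- move=> l a b a' b' /andP [al _] /hb_elim_Some [E _] /hb_elim_Some [Ea _].
  by apply: (hall_condition hallS al E Ea).
- move=> l l' /andP [al _] /andP [al' _].
  case E: (hb_elim l) => [[a b]|] // _ E'.
  have [El _] := hb_elim_Some E; have [El' _] := hb_elim_Some (esym E').
  by apply: (hall_injective hallS) => //; rewrite El ?El'.
Qed.

Local Notation F := (hfield_on R h act).
Local Notation F' := (hfield_on R hb_elim act_elim).

Definition lower_m0 (I : 'X_{1..n}) (m : nat) : 'X_{1..n} :=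
  [multinom (if j == m0 then (I j - m)%N else I j) | j < n].

(* The field [[X_c, X_m0, ..., X_m0]] with [m] brackets, in closed form:
   each bracket with [X_m0 = d/dx_m0] lowers the exponent of [x_m0]. *)
Definition iter_gen (c : 'I_n) (m : nat) (k : 'I_n) : {mpoly R[n]} :=
  if act k && hprec h c k && (m <= Iidx h k m0)%N then
    ((-1) ^+ mdeg (lower_m0 (Iidx h k) m) / (mfact (lower_m0 (Iidx h k) m))%:R) *:
      'X_[lower_m0 (Iidx h k) m]
  else 0.

Lemma iter_genS c m k : - (iter_gen c m k)^`M(m0) = iter_gen c m.+1 k.
Proof.
rewrite /iter_gen; case: (act k && hprec h c k) => /=; last by rewrite mderiv0 oppr0.
set I := Iidx h k.
have [lt|gt|eq] := ltngtP m (I m0).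
- rewrite mderiv_signed_monomial; last by rewrite mnmE eqxx subn_gt0.
  have -> // : (lower_m0 I m - U_(m0))%MM = lower_m0 I m.+1.
  apply/mnmP => j; rewrite mnmBE !mnmE eq_sym.
  by case: eqP => _; rewrite ?subn0 // subnS subn1.
- by rewrite mderiv0 oppr0.
- by rewrite mderivZ mderivX mnmE eqxx eq subnn scale0r scaler0 oppr0.
Qed.

Lemma elim_generator b : act_elim b -> hb_elim b = None ->
  exists c p, [/\ h c = None, act c, c != m0,
    hstring h b = c :: nseq p m0 & forall k, F b k = iter_gen c p k].
Proof.
elim/ord_lt_ind: b => b IH /andP [ab bm] E'.
case E: (h b) => [[a b1]|].
- have [aa ab1 ba al] := hall_ordered hallS ab E.
  have b1m : b1 = m0 by move: E'; rewrite /hb_elim E; case: eqP.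
  subst b1.
  have am : a != m0 by apply/eqP => am; rewrite am ltnn in ba.
  have Ea' : hb_elim a = None.
    rewrite /hb_elim; case Ea: (h a) => [[a1 k1]|] //.
    have [_ ak1 _ _] := hall_ordered hallS aa Ea.
    have -> : k1 = m0.
      by apply: val_inj; apply/eqP; rewrite eqn_leq (hall_condition hallS ab E Ea) m0_min.
    by rewrite eqxx.
  have [c [p [hc ac cm sa Fa]]] := IH a al (introT andP (conj aa am)) Ea'.
  exists c, p.+1; split=> //.
    by rewrite (hstring_bracket hallS ab E) sa rcons_cons rcons_nseq.
  by move=> k; rewrite (hfield_onE R hallS ab) E (vbr_least hallS act_m0 m0_min) Fa iter_genS.
- exists b, 0%N; split=> //; first by rewrite (hstring_generator hallS ab E).
  move=> k; rewrite (hfield_onE R hallS ab) E /genfield_on /iter_gen /genfield.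
  case: (act k) => //=; case: (hprec h b k) => //=.
  have -> // : lower_m0 (Iidx h k) 0 = Iidx h k.
  by apply/mnmP => j; rewrite mnmE; case: eqP => // _; rewrite subn0.
Qed.

Lemma elim_hstring k : act_elim k -> exists b t, [/\ act_elim b, hb_elim b = None,
  hstring hb_elim k = b :: t, hstring h k = hstring h b ++ t & m0 \notin t].
Proof.
have hallS' := hall_system_elim.
elim/ord_lt_ind: k => k IH ak; move/andP: (ak) => [akk km].
case E': (hb_elim k) => [[a b]|].
- have [aa ab ba al] := hall_ordered hallS' ak E'; have [E bm] := hb_elim_Some E'.
  have [b0 [t [ab0 hb0 s' s ntm]]] := IH a al aa.
  exists b0, (rcons t b); split => //.
  + by rewrite (hstring_bracket hallS' ak E') s'.
  + by rewrite (hstring_bracket hallS akk E) s rcons_cat.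
  + by rewrite mem_rcons in_cons negb_or eq_sym bm.
- exists k, [::]; split => //; first by rewrite (hstring_generator hallS' ak E').
  by rewrite cats0.
Qed.

Definition zero_m0 : n.-tuple {mpoly R[n]} :=
  [tuple (if i == m0 then 0 else 'X_i) | i < n].

Local Notation subst_m0 := (comp_mpoly zero_m0).

Lemma subst_m0X (m : 'X_{1..n}) :
  subst_m0 'X_[m] = if (m m0 == 0)%N then 'X_[m] else 0.
Proof.
rewrite comp_mpolyX [in RHS]mpolyXE_id.
case: eqP => [m00|mn0].
  apply: eq_bigr => i _; rewrite tnth_mktuple; case: eqP => // ->.
  by rewrite m00 !expr0.
rewrite (bigD1 m0) //= tnth_mktuple eqxx expr0n.
by move/eqP/negbTE: mn0 => ->; rewrite mul0r.
Qed.

Lemma subst_m0_mderiv j p : j != m0 -> subst_m0 (p^`M(j)) = (subst_m0 p)^`M(j).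
Proof.
move=> jm; elim/mpolyind: p => [|c m p _ _ IH].
  by rewrite mderiv0 comp_mpoly0 mderiv0.
rewrite mderivD !comp_mpolyD mderivD IH; congr (_ + _).
rewrite mderivZ !comp_mpolyZ mderivZ mderivX comp_mpolyZ !subst_m0X.
have -> : ((m - U_(j))%MM m0 = m m0)%N by rewrite mnmBE mnm1E (negbTE jm) subn0.
by case: eqP => _; rewrite ?mderivX ?mderiv0 ?scaler0.
Qed.

Lemma mcoeff0_subst_m0 p : (subst_m0 p)@_0 = p@_0.
Proof.
elim/mpolyind: p => [|c m p _ _ IH]; first by rewrite comp_mpoly0.
rewrite comp_mpolyD comp_mpolyZ !mcoeffD IH !mcoeffZ subst_m0X.
congr (_ * _ + _); case: eqP => // mn0.
rewrite mcoeff0 mcoeffX; case: eqP => // em.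
by move: mn0; rewrite em mnm0E.
Qed.

Lemma subst_m0_iter_gen l c p k : act_elim l -> hb_elim l = None -> h c = None ->
  act c -> c != m0 -> hstring h l = c :: nseq p m0 ->
  subst_m0 (iter_gen c p k) = genfield_on R hb_elim act_elim l k.
Proof.
move=> al E' hc ac cm sl; have hallS' := hall_system_elim.
rewrite /genfield_on /iter_gen.
case ak: (act k) => /=; last by rewrite /act_elim ak comp_mpoly0.
have [->|km] := eqVneq k m0.
  rewrite /act_elim eqxx andbF /hprec (hstring_generator hallS ac hc).
  rewrite (hstring_generator hallS act_m0 (least_generator hallS act_m0 m0_min)).
  by rewrite prefix_cons prefix0s andbT (negbTE cm) /= comp_mpoly0.
have ak' : act_elim k by rewrite /act_elim ak km.
rewrite ak' /=.
have [b [t [ab hb s' s ntm]]] := elim_hstring ak'.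
have [c' [p' [hc' ac' cm' sb _]]] := elim_generator ab hb.
have ct0 : count_mem m0 t = 0%N by apply/count_memPn.
have I0 : Iidx h k m0 = p'.
  by rewrite /Iidx s sb mnmE /= count_cat count_nseq /= eqxx mul1n ct0 addn0.
have II' : lower_m0 (Iidx h k) p' = Iidx hb_elim k.
  apply/mnmP => j; rewrite /Iidx s sb s' !mnmE /= count_cat count_nseq /=.
  case: eqP => [->|jm]; first by rewrite eqxx mul1n ct0 addn0 subnn.
  by rewrite eq_sym; move/eqP/negbTE: jm => ->; rewrite mul0n add0n.
have I'0 : Iidx hb_elim k m0 = 0%N by rewrite /Iidx s' mnmE /= ct0.
have Pc : hprec h c k = (c == c').
  by rewrite /hprec (hstring_generator hallS ac hc) s sb cat_cons prefix_cons prefix0s andbT.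
have Pl : hprec hb_elim l k = (l == b).
  by rewrite /hprec (hstring_generator hallS' al E') s' prefix_cons prefix0s andbT.
have lb : (l == b) = (c == c') && (p == p').
  apply/eqP/andP => [lb|[/eqP cc /eqP pp]].
    move: sl; rewrite lb sb => -[-> /(congr1 size)]; rewrite !size_nseq => ->.
    by split.
  apply: (hstring_inj hallS); [by case/andP: al | by case/andP: ab |].
  by rewrite sl sb cc pp.
rewrite /genfield Pc Pl lb I0.
case: eqP => [cc|] /=; last by rewrite comp_mpoly0.
have [lt|gt|->] := ltngtP p p'.
- rewrite comp_mpolyZ subst_m0X mnmE eqxx I0.
  by have := lt; rewrite -subn_gt0 lt0n => /negbTE ->; rewrite scaler0.
- by rewrite comp_mpoly0.
- by rewrite II' comp_mpolyZ subst_m0X I'0 eqxx.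
Qed.

Lemma subst_m0_hfield_on l : act_elim l -> forall k, subst_m0 (F l k) = F' l k.
Proof.
have hallS' := hall_system_elim.
elim/ord_lt_ind: l => l IH al k; move/andP: (al) => [all lm].
case E': (hb_elim l) => [[a b]|].
- have [aa ab ba al'] := hall_ordered hallS' al E'; have [E bm] := hb_elim_Some E'.
  have am : a != m0 by move/andP: aa => [].
  rewrite (hfield_onE R hallS all) E (hfield_onE R hallS' al) E' /vbr raddf_sum /=.
  apply: eq_bigr => j _; rewrite comp_mpolyB !rmorphM /=.
  rewrite -!(IH a al' aa) -!(IH b (ltn_trans ba al') ab).
  have [->|jm] := eqVneq j m0; last by rewrite !subst_m0_mderiv.
  have [aa1 _] := andP aa; have [ab1 _] := andP ab.
  rewrite !(hfield_on_least_coord R hallS act_m0 m0_min) // (negbTE am) (negbTE bm).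
  by rewrite mulr0n mpolyC0 comp_mpoly0 !mul0r.
- have [c [p [hc ac cm sl Fl]]] := elim_generator al E'.
  by rewrite Fl (@subst_m0_iter_gen l c p k al E' hc ac cm sl) (hfield_onE R hallS' al) E'.
Qed.

End Elimination.

Lemma hfield_on_at0 (R : realType) n N (h : 'I_n -> option ('I_n * 'I_n))
  (act : pred 'I_n) : (#|act| <= N)%N -> hall_system h act ->
  forall l k, act l -> (hfield_on R h act l k)@_0 = (l == k)%:R.
Proof.
elim: N h act => [|N IH] h act card_act hallS l k al.
  have : (0 < #|act|)%N by apply/card_gt0P; exists l.
  by rewrite ltnNge card_act.
case: (arg_minnP (fun i : 'I_n => val i) al) => m0 act_m0 m0_min.
have [->|lm] := eqVneq l m0.
  by rewrite (hfield_on_least R hallS act_m0 m0_min) mcoeffC eqxx mulr1 eq_sym.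
have [->|km] := eqVneq k m0.
  by rewrite (hfield_on_least_coord R hallS act_m0 m0_min al) mcoeffC eqxx mulr1 (negbTE lm).
have al' : act_elim act m0 l by rewrite /act_elim al lm.
rewrite -(mcoeff0_subst_m0 m0) (subst_m0_hfield_on R hallS act_m0 m0_min al').
apply: IH al' => //; last exact: hall_system_elim.
have := cardD1 m0 act; rewrite [m0 \in act]act_m0 add1n => E.
have -> : #|act_elim act m0| = #|[predD1 act & m0]|.
  by apply: eq_card => x; rewrite !inE /act_elim andbC.
by rewrite -ltnS -E.
Qed.

Section Nested.
Variables (R : realType) (n : nat) (hb : 'I_n -> option ('I_n * 'I_n)).

Definition bracket_pow (alpha : 'X_{1..n}) (Z : vfield R n) (j : 'I_n) : vfield R n :=
  iter (alpha j) (fun W => vbr W (hfield R hb j)) Z.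

Lemma nestedE (Y : vfield R n) alpha :
  nested hb Y alpha = foldl (bracket_pow alpha) Y (enum 'I_n).
Proof. by []. Qed.

Lemma foldl_bracket_pow_id (alpha : 'X_{1..n}) Z (s : seq 'I_n) :
  {in s, forall j, alpha j = 0%N} -> foldl (bracket_pow alpha) Z s = Z.
Proof.
elim: s Z => //= j s IH Z a0; rewrite /bracket_pow a0 ?mem_head //=.
by apply: IH => x xs; apply: a0; rewrite inE xs orbT.
Qed.

Lemma nested0 (Y : vfield R n) : nested hb Y 0%MM = Y.
Proof. by rewrite nestedE foldl_bracket_pow_id // => j _; rewrite mnm0E. Qed.

Lemma nested_addU (Y : vfield R n) (alpha : 'X_{1..n}) (b : 'I_n) :
  (forall j : 'I_n, (b < j)%N -> alpha j = 0%N) ->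
  nested hb Y (alpha + U_(b))%MM = vbr (nested hb Y alpha) (hfield R hb b).
Proof.
move=> alpha_gt_b; rewrite !nestedE.
have sorted_enum : sorted (fun x y : 'I_n => (x < y)%N) (enum 'I_n).
  by have := iota_ltn_sorted 0 n; rewrite -val_enum_ord sorted_map.
have b_enum : b \in enum 'I_n by rewrite mem_enum.
case/splitPr: b_enum sorted_enum (enum_uniq 'I_n) => s1 s2 srt uq.
have s2_gt : forall j, j \in s2 -> (b < j)%N.
  move: srt; rewrite sorted_pairwise ?pairwise_cat /=; last exact: ltn_trans.
  by case/and4P => _ _ /allP.
have bs1 : b \notin s1.
  by move: uq; rewrite cat_uniq /= negb_or => /and3P [_ /andP [bs1 _] _].
have id_s2 (beta : 'X_{1..n}) : (forall j : 'I_n, (b < j)%N -> beta j = 0%N) ->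
    forall Z, foldl (bracket_pow beta) Z s2 = Z.
  by move=> beta_gt_b Z; apply: foldl_bracket_pow_id => j /s2_gt /beta_gt_b.
rewrite !foldl_cat /= !id_s2 // => [|j bj]; last first.
  by rewrite mnmDE mnm1E alpha_gt_b //; case: eqP => // eb; rewrite eb ltnn in bj.
rewrite /bracket_pow mnmDE mnm1E eqxx addn1 iterS; congr (vbr _ _); congr iter.
apply: eq_in_foldl => j js Z; rewrite /bracket_pow mnmDE mnm1E.
by case: eqP => [ebj|]; [move: bs1; rewrite ebj js | rewrite addn0].
Qed.

End Nested.

Section HallBasisRealization.
Variables (R : realType) (r s n : nat) (hb : 'I_n -> option ('I_n * 'I_n))
  (deg : 'I_n -> nat).
Hypothesis hallB : HallBasis r s n hb deg.

Lemma HallBasis_hall_system : hall_system hb predT.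
Proof.
have [_ [gen_r [_ [bracket [_ [_ [_ inj]]]]]]] := hallB.
split=> [l a b _ E|l a b a' b' _ E Ea|l l' _ _ hl E].
- by have [ba al _ _] := bracket l a b E; split.
- by have [_ _ _ cond] := bracket l a b E; apply: cond Ea.
- by apply: inj E; rewrite leqNgt; apply/negP => /gen_r; apply/eqP.
Qed.

Lemma HallBasis_generator_lt l : hb l = None -> (l < r)%N.
Proof. by have [_ [gen_r _]] := hallB; apply: (gen_r l).2. Qed.

Let hallS := HallBasis_hall_system.

Lemma hfield_bracket l a b : hb l = Some (a, b) ->
  hfield R hb l = vbr (hfield R hb a) (hfield R hb b).
Proof. by move=> E; rewrite !hfield_on_predT (hfield_onE R hallS (isT : predT l)) E. Qed.

Lemma hfield_at0 l k : (hfield R hb l k)@_0 = (l == k)%:R.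
Proof. by rewrite hfield_on_predT (hfield_on_at0 R (leqnn _) hallS). Qed.

Lemma struct_const_at0 c : gen_struct_const hb c ->
  forall i alpha k, c i alpha k = (nested hb (hfield R hb i) alpha k)@_0.
Proof.
move=> Hc i alpha k; rewrite Hc raddf_sum (bigD1 k) //= big1 => [|j jk].
  by rewrite mcoeffZ hfield_at0 eqxx mulr1 addr0.
by rewrite mcoeffZ hfield_at0 (negbTE jk) mulr0.
Qed.

Definition string_tail (i l : 'I_n) : 'X_{1..n} :=
  [multinom count_mem j (drop (size (hstring hb i)) (hstring hb l)) | j < n].

Lemma nested_prefix l i : hprec hb i l ->
  nested hb (hfield R hb i) (string_tail i l) = hfield R hb l.
Proof.
elim/ord_lt_ind: l i => l IH i P.
have [eqs|neqs] := eqVneq (hstring hb i) (hstring hb l).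
  rewrite -(hstring_inj hallS isT isT eqs) /string_tail drop_size.
  have -> : [multinom count_mem j ([::] : seq 'I_n) | j < n] = 0%MM.
    by apply/mnmP => j; rewrite !mnmE.
  by rewrite nested0.
case E: (hb l) => [[a b]|]; last first.
  move: P neqs; rewrite /hprec (hstring_generator hallS isT E) prefixs1.
  by case/orP=> /eqP e; [move: (hstring_neq0 hb i); rewrite e | rewrite e eqxx].
have [_ _ ba al] := hall_ordered hallS isT E.
move: P neqs; rewrite /hprec (hstring_bracket hallS isT E) => P neqs.
have Pa := prefix_rcons_neq P neqs.
rewrite /string_tail (hstring_bracket hallS isT E) drop_rcons ?size_prefix //.
rewrite (hfield_bracket E) -(IH a al i Pa).
set t := drop _ (hstring hb a).
have -> : [multinom count_mem j (rcons t b) | j < n] =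
          ([multinom count_mem j t | j < n] + U_(b))%MM.
  by apply/mnmP => j; rewrite mnmDE !mnmE -cats1 count_cat /= addn0 eq_sym.
apply: nested_addU => j bj; rewrite mnmE; apply/count_memPn; apply/negP => jt.
suff : (j <= b)%N by rewrite leqNgt bj.
apply: (hstring_behead_le hallS isT E); move: jt; rewrite /t.
have := hstring_neq0 hb i; case: (hstring hb i) => [|y u] //= _.
by case: (hstring hb a) => //= z v; apply: mem_drop.
Qed.

Lemma hprec_head_generator (l : 'I_n) : exists2 i : 'I_n, (i < r)%N & hprec hb i l.
Proof.
have [i [t [sl hi]]] := hstring_head hallS (isT : predT l).
exists i; first exact: HallBasis_generator_lt.
by rewrite /hprec (hstring_generator hallS isT hi) sl prefix_cons eqxx prefix0s.
Qed.

End HallBasisRealization.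

Lemma signed_inv_mfact_neq0 (R : realType) n (alpha : 'X_{1..n}) :
  ((-1) ^+ mdeg alpha / (mfact alpha)%:R : R) != 0.
Proof.
rewrite mulf_neq0 ?expf_neq0 ?oppr_eq0 ?oner_eq0 //.
by rewrite invr_neq0 // pnatr_eq0 -lt0n mfact_gt0.
Qed.

Lemma Pcoef_nested (R : realType) r s n (hb : 'I_n -> option ('I_n * 'I_n)) deg
  (c : 'I_n -> 'X_{1..n} -> 'I_n -> R) v i alpha l :
  HallBasis r s n hb deg -> gen_struct_const hb c ->
  nested hb (hfield R hb i) alpha = hfield R hb l ->
  Pcoef c v i alpha = (-1) ^+ mdeg alpha / (mfact alpha)%:R * v l.
Proof.
move=> hallB Hc E; rewrite /Pcoef; congr (_ * _).
have cE k : c i alpha k = (l == k)%:R.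
  by rewrite (struct_const_at0 hallB Hc) E (hfield_at0 R hallB).
rewrite (bigD1 l) //= big1 => [|k kl]; first by rewrite cE eqxx mul1r addr0.
by rewrite cE eq_sym (negbTE kl) mul0r.
Qed.

Theorem proposition4p3 (R : realType) (r s n : nat)
  (hb : 'I_n -> option ('I_n * 'I_n)) (deg : 'I_n -> nat) :
  (2 <= r)%N -> (2 <= s)%N -> HallBasis r s n hb deg ->
  forall c : 'I_n -> 'X_{1..n} -> 'I_n -> R,
  gen_struct_const hb c ->
  [/\ (forall (v : 'I_n -> R) (i l : 'I_n), hprec hb i l -> v l <> 0 ->
         exists alpha : 'X_{1..n}, Pcoef c v i alpha <> 0),
      (forall v : 'I_n -> R,
         (forall i : 'I_n, (i < r)%N -> forall alpha, Pcoef c v i alpha = 0) ->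
         v = (fun _ => 0)) &
      (forall (v : 'I_n -> R) (i : 'I_n), Pcoef c v i 0%MM = v i)].
Proof.
move=> _ _ hallB c Hc.
have Pcoef_tail v i l : hprec hb i l -> Pcoef c v i (string_tail hb i l) =
    (-1) ^+ mdeg (string_tail hb i l) / (mfact (string_tail hb i l))%:R * v l.
  by move/(nested_prefix R hallB)/(Pcoef_nested v hallB Hc).
split.
- move=> v i l il vl; exists (string_tail hb i l); rewrite Pcoef_tail //.
  by apply/eqP; rewrite mulf_neq0 ?signed_inv_mfact_neq0 //; apply/eqP.
- move=> v P0; apply: functional_extensionality => l.
  have [i ir il] := hprec_head_generator hallB l.
  have /eqP := P0 i ir (string_tail hb i l).
  by rewrite Pcoef_tail // mulf_eq0 (negbTE (signed_inv_mfact_neq0 _ _)) => /eqP.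
- move=> v i; rewrite (Pcoef_nested v hallB Hc (nested0 _ _)).
  by rewrite mdeg0 mfact0 expr0 divr1 mul1r.
Qed.
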